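(* For $\theta,\rho\in\mathbb{R}$ let $a_0=\tfrac14(1-\cos2\theta-\sin2\theta-\cos2\rho-\sin2\rho+\cos(2\theta-2\rho)+\sin(2\theta-2\rho))$, $a_1=\tfrac14(1+\cos2\theta-\sin2\theta+\cos2\rho-\sin2\rho+\cos(2\theta-2\rho)-\sin(2\theta-2\rho))$, $a_2=\tfrac12(1-\cos(2\theta-2\rho)-\sin(2\theta-2\rho))$, $a_3=\tfrac12(1-\cos(2\theta-2\rho)+\sin(2\theta-2\rho))$, $a_4=\tfrac14(1+\cos2\theta+\sin2\theta+\cos2\rho+\sin2\rho+\cos(2\theta-2\rho)+\sin(2\theta-2\rho))$, $a_5=\tfrac14(1-\cos2\theta+\sin2\theta-\cos2\rho+\sin2\rho+\cos(2\theta-2\rho)-\sin(2\theta-2\rho))$, and $m_0^{(\theta,\rho)}(z)=\frac{1}{\sqrt2}\sum_{k=0}^5a_kz^k$. Then: (a) $m_0^{(\theta,\rho)}(z)$ is divisible by $(1+z)^2$ if and only if $\cos2\theta+\cos2\rho=\tfrac12$. (b) $m_0^{(\theta,\rho)}(z)$ is divisible by $(1+z)^3$ if and only if $\cos2\theta+\cos2\rho=\tfrac12$ and $\sin2\theta+\sin2\rho=2\sin(2\theta-2\rho)$; equivalently, if and only if $(\theta,\rho)$ equals $(\theta_0,\rho_0)$ with $\theta_0=\cos^{-1}\sqrt[4]{5/32}$ and $\rho_0=\cos^{-1}\sqrt{5/4-\sqrt{5/32}}$, or is obtained from this pair by $(\theta,\rho)\mapsto(\theta+m\pi,\rho+n\pi)$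 with $m,n\in\mathbb{Z}$, or by $(\theta,\rho)\mapsto(-\theta,-\rho)$, or by both.
   Context: These $a_k$ are the filter coefficients of the genus-3, scale-2 loop $A(z)=V(Q_\theta^\perp+zQ_\theta)(Q_\rho^\perp+zQ_\rho)$, where $Q_\theta$ is the projection onto $(\cos\theta,\sin\theta)^{T}$ and $V$ is proportional to $\begin{pmatrix}1&1\\1&-1\end{pmatrix}$; divisibility is in the polynomial ring $\mathbb{C}[z]$. *)

From HB Require Import structures.
From mathcomp Require Import all_boot all_order all_algebra.
From mathcomp Require Import reals trigo.
From mathcomp Require Import complex.
Set Implicit Arguments. Unset Strict Implicit. Unset Printing Implicit Defensive.
Import Order.TTheory GRing.Theory Num.Theory.
Local Open Scope ring_scope.

Section Filter.
Variable R : realType.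

Definition acoef (theta rho : R) (k : nat) : R :=
  let c2t := cos (2 * theta) in let s2t := sin (2 * theta) in
  let c2r := cos (2 * rho) in let s2r := sin (2 * rho) in
  let cd := cos (2 * theta - 2 * rho) in let sd := sin (2 * theta - 2 * rho) in
  match k with
  | 0%N => 4^-1 * (1 - c2t - s2t - c2r - s2r + cd + sd)
  | 1%N => 4^-1 * (1 + c2t - s2t + c2r - s2r + cd - sd)
  | 2%N => 2^-1 * (1 - cd - sd)
  | 3%N => 2^-1 * (1 - cd + sd)
  | 4%N => 4^-1 * (1 + c2t + s2t + c2r + s2r + cd + sd)
  | 5%N => 4^-1 * (1 - c2t + s2t - c2r + s2r + cd - sd)
  | _ => 0
  end.

Definition m0 (theta rho : R) : {poly R[i]} :=
  \sum_(k < 6) ((((Num.sqrt (2 : R))^-1 * acoef theta rho k)%:C)%C *: 'X^k).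

Definition theta0 : R := acos (Num.sqrt (Num.sqrt (5 / 32))).
Definition rho0 : R := acos (Num.sqrt (5 / 4 - Num.sqrt (5 / 32))).

End Filter.

(* Expanding m_0 in powers of 1 + z, its first Taylor coefficients at z = -1
   are 0, 1 - 2 (cos 2θ + cos 2ρ) and an affine combination of the cosines and
   sines of 2θ, 2ρ and 2θ - 2ρ; this gives (a) and the first form of (b).
   Writing c, s, C, S for the cosines and sines of 2θ and 2ρ, eliminating C
   and squaring shows that c is a root of 8c^2 + 16c + 3 greater than -1,
   which pins down c and C, and then (s, S) is determined up to a common sign.
   Since (θ0, ρ0) is a solution, every solution satisfies
   (2θ, 2ρ) = ±(2θ0, 2ρ0) modulo 2π. *)

From mathcomp Require Import all_boot all_order all_algebra.
From mathcomp Require Import reals trigo.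
From mathcomp Require Import complex.
From mathcomp Require Import ring lra.
Set Implicit Arguments.
Unset Strict Implicit.
Unset Printing Implicit Defensive.
Import Order.TTheory GRing.Theory Num.Theory.
Local Open Scope ring_scope.

Section DivisibilityByPowersOfLinear.
Variable F : fieldType.
Implicit Types (a c : F) (q : {poly F}).

Lemma dvdp_XsubC_expS a c n q :
  (('X - a%:P) ^+ n.+1 %| c%:P + ('X - a%:P) * q) =
  (c == 0) && (('X - a%:P) ^+ n %| q).
Proof.
have [->|c_neq0] := eqVneq c 0.
  by rewrite add0r exprS dvdp_mul2l ?polyXsubC_eq0.
apply/negP => dvd_n1.
have : 'X - a%:P %| c%:P + ('X - a%:P) * q.
  by apply: dvdp_trans dvd_n1; rewrite exprS dvdp_mulr.
by rewrite dvdp_addl ?dvdp_mulr // dvdp_XsubCl rootC (negPf c_neq0).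
Qed.

(* The Taylor coefficients at -1 of sum_(k < 6) a_k z^k. *)
Definition taylorN1_0 (a : nat -> F) := a 0%N - a 1%N + a 2%N - a 3%N + a 4%N - a 5%N.
Definition taylorN1_1 (a : nat -> F) :=
  a 1%N - a 2%N *+ 2 + a 3%N *+ 3 - a 4%N *+ 4 + a 5%N *+ 5.
Definition taylorN1_2 (a : nat -> F) := a 2%N - a 3%N *+ 3 + a 4%N *+ 6 - a 5%N *+ 10.

Lemma sum6_expansion_N1 (a : nat -> F) : \sum_(k < 6) a k *: 'X^k =
  (taylorN1_0 a)%:P + ('X + 1) * ((taylorN1_1 a)%:P + ('X + 1) * ((taylorN1_2 a)%:P +
  ('X + 1) * ((a 3%N - a 4%N *+ 4 + a 5%N *+ 10)%:P +
  ('X + 1) * ((a 4%N - a 5%N *+ 5)%:P + ('X + 1) * (a 5%N)%:P)))).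
Proof. by rewrite /taylorN1_0 /taylorN1_1 /taylorN1_2 !big_ord_recr big_ord0 /= -!mul_polyC; ring. Qed.

Lemma dvdp_XaddC2_sum6 (a : nat -> F) :
  (('X + 1) ^+ 2 %| \sum_(k < 6) a k *: 'X^k) = (taylorN1_0 a == 0) && (taylorN1_1 a == 0).
Proof.
rewrite sum6_expansion_N1.
have -> : 'X + 1 = 'X - (-1)%:P :> {poly F} by rewrite polyCN opprK.
by rewrite !dvdp_XsubC_expS expr0 dvd1p andbT.
Qed.

Lemma dvdp_XaddC3_sum6 (a : nat -> F) :
  (('X + 1) ^+ 3 %| \sum_(k < 6) a k *: 'X^k) =
  [&& taylorN1_0 a == 0, taylorN1_1 a == 0 & taylorN1_2 a == 0].
Proof.
rewrite sum6_expansion_N1.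
have -> : 'X + 1 = 'X - (-1)%:P :> {poly F} by rewrite polyCN opprK.
by rewrite !dvdp_XsubC_expS expr0 dvd1p andbT.
Qed.
End DivisibilityByPowersOfLinear.

Section Trigonometry.
Variable R : realType.
Implicit Types (x y : R) (k : int).

Lemma normr_sinDzpi x k : `|sin (x + k%:~R * pi)| = `|sin x|.
Proof.
have sinDnpi y (n : nat) : `|sin (y + n%:R * pi)| = `|sin y|.
  by rewrite mulr_natl (alternatingn (@sinDpi R)) normrM normrX normrN1 expr1n mul1r.
case: k => n; first exact: sinDnpi.
by rewrite NegzE mulrNz mulNr -(sinDnpi _ n.+1) subrK.
Qed.

Lemma sin_eq0 x : sin x = 0 <-> exists k : int, x = k%:~R * pi.
Proof.
split=> [sx0|[k ->]]; last by apply/normr0_eq0; rewrite -[_ * pi]add0r normr_sinDzpi sin0 normr0.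
have pi_gt0 := @pi_gt0 R.
set k := Num.floor (x / pi); exists k.
have /andP[kx xk1] := floor_itv (x / pi).
set w := x - k%:~R * pi.
suff : w = 0 by move/eqP; rewrite subr_eq0 => /eqP.
have w_ge0 : 0 <= w by rewrite subr_ge0 -ler_pdivlMr.
have w_ltpi : w < pi.
  by rewrite ltrBlDl -[X in _ + X]mul1r -mulrDl -ltr_pdivrMr // -[1]/(1%:~R) -intrD.
have sw0 : sin w = 0.
  by apply/normr0_eq0; rewrite /w -mulNr -rmorphN normr_sinDzpi sx0 normr0.
apply/eqP; rewrite eq_le w_ge0 andbT leNgt; apply/negP => w_gt0.
by move: (@sin_gt0_pi R w); rewrite w_gt0 w_ltpi sw0 ltxx => /(_ isT).
Qed.

Lemma cos_sin_acos_sqrt (a : R) : 0 <= a <= 1 ->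
  cos (acos (Num.sqrt a)) = Num.sqrt a /\ sin (acos (Num.sqrt a)) = Num.sqrt (1 - a).
Proof.
case/andP=> a_ge0 a_le1.
have sa_itv : -1 <= Num.sqrt a <= 1.
  by rewrite (le_trans (lerN10 _)) ?sqrtr_ge0 //= -sqrtr1 ler_sqrt.
by rewrite acosK ?in_itv // sin_acos // sqr_sqrtr.
Qed.

Lemma cos_sin_mul2 x :
  cos (2 * x) = 2 * cos x ^+ 2 - 1 /\ sin (2 * x) = 2 * (cos x * sin x).
Proof. by rewrite !mulr_natl cos_mulr2n sin_mulr2n. Qed.

Lemma cos_sin_mul2_eq x y :
  cos (2 * x) = cos (2 * y) /\ sin (2 * x) = sin (2 * y) <->
  exists k : int, x = y + k%:~R * pi.
Proof.
have [cos2d sin2d] := cos_sin_mul2 (x - y).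
have cs1 := cos2Dsin2 (x - y).
have -> : (exists k : int, x = y + k%:~R * pi) <-> sin (x - y) = 0.
  rewrite sin_eq0; split=> -[k ek]; exists k; first by rewrite ek addrC addKr.
  by rewrite -ek addrC subrK.
have e2x : 2 * x = 2 * y + 2 * (x - y) by ring.
split=> [[ec es]|sd0].
  have : cos (2 * (x - y)) = 1.
    by rewrite mulrBr cosB ec es -!expr2 cos2Dsin2.
  rewrite cos2d => c1; apply/eqP; rewrite -sqrf_eq0; apply/eqP; lra.
have c1 : cos (x - y) ^+ 2 = 1 by rewrite sd0 in cs1; lra.
by rewrite e2x cosD sinD cos2d sin2d c1 sd0; split; ring.
Qed.
End Trigonometry.

Section MomentSystem.
Variable R : realFieldType.
Implicit Types c s C S : R.

(* The two conditions of (b), in the variables c = cos 2θ, s = sin 2θ,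
   C = cos 2ρ and S = sin 2ρ. *)
Definition moment_system c s C S : Prop :=
  c + C = 2^-1 /\ s + S = 2 * (s * C - c * S).

Lemma moment_systemN c s C S :
  moment_system c s C S -> moment_system c (- s) C (- S).
Proof. by case=> h1 h2; split=> //; lra. Qed.

Lemma moment_system_cos_root c s C S :
  c ^+ 2 + s ^+ 2 = 1 -> C ^+ 2 + S ^+ 2 = 1 -> moment_system c s C S ->
  8 * c ^+ 2 + 16 * c + 3 = 0 /\ S * (1 + 2 * c) = - 2 * c * s.
Proof.
move=> cs1 CS1 [sumC sumS].
have eC : C = 2^-1 - c by lra.
rewrite eC in sumS CS1.
have eS : S * (1 + 2 * c) = - 2 * c * s by lra.
split=> //.
have : (S * (1 + 2 * c)) ^+ 2 = (- 2 * c * s) ^+ 2 by rewrite eS.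
have S2 : S ^+ 2 = 1 - (2^-1 - c) ^+ 2 by lra.
have s2 : s ^+ 2 = 1 - c ^+ 2 by lra.
rewrite !exprMn S2 s2 => h; lra.
Qed.

Lemma moment_system_unique c s C S c' s' C' S' :
  c ^+ 2 + s ^+ 2 = 1 -> C ^+ 2 + S ^+ 2 = 1 -> moment_system c s C S ->
  c' ^+ 2 + s' ^+ 2 = 1 -> C' ^+ 2 + S' ^+ 2 = 1 -> moment_system c' s' C' S' ->
  [/\ c = c', C = C' & (s = s' /\ S = S') \/ (s = - s' /\ S = - S')].
Proof.
move=> cs1 CS1 sys cs1' CS1' sys'.
have [root eS] := moment_system_cos_root cs1 CS1 sys.
have [root' eS'] := moment_system_cos_root cs1' CS1' sys'.
have root_gtN1 (x y : R) : x ^+ 2 + y ^+ 2 = 1 -> 8 * x ^+ 2 + 16 * x + 3 = 0 -> -1 < x.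
  move=> xy1 rootx; rewrite lt_neqAle; apply/andP; split.
    by apply/eqP => x1; move: rootx; rewrite -x1; lra.
  have : `|x| ^+ 2 <= 1 by rewrite real_normK ?num_real // -xy1 lerDl sqr_ge0.
  by rewrite expr_le1 // ler_norml => /andP[].
have cc' : c = c'.
  (* the other root of 8 x^2 + 16 x + 3 is below -1 *)
  have := root_gtN1 _ _ cs1 root; have := root_gtN1 _ _ cs1' root' => ? ?.
  have : (c - c') * (8 * (c + c') + 16) = 0 by lra.
  by move/eqP; rewrite mulf_eq0 subr_eq0 => /orP[/eqP //|/eqP]; lra.
subst c'; split=> //; first by case: sys => ?; case: sys' => ?; lra.
have nz : 1 + 2 * c != 0.
  by apply/eqP => c12; move: root; rewrite (_ : c = - 2^-1); lra.
have : (s - s') * (s + s') = 0 by lra.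
move/eqP; rewrite mulf_eq0 subr_eq0 addr_eq0 => /orP[]/eqP ss'; [left | right].
  by split=> //; apply: (mulIf nz); rewrite eS eS' ss'.
by split=> //; apply: (mulIf nz); rewrite mulNr eS eS' ss'; ring.
Qed.
End MomentSystem.

Section Solutions.
Variable R : realType.

Lemma moment_system_theta0_rho0 :
  moment_system (cos (2 * theta0 R)) (sin (2 * theta0 R))
                (cos (2 * rho0 R)) (sin (2 * rho0 R)).
Proof.
set q : R := Num.sqrt (5 / 32).
have q_ge0 : 0 <= q by rewrite sqrtr_ge0.
have q2 : q ^+ 2 = 5 / 32 by rewrite sqr_sqrtr //; lra.
have q_gt : 1/4 < q by nra.
have q_lt : q < 1/2 by nra.
have [ct st] : cos (theta0 R) = Num.sqrt q /\ sin (theta0 R) = Num.sqrt (1 - q).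
  by apply: (@cos_sin_acos_sqrt _ q); apply/andP; split; lra.
have [cr sr] : cos (rho0 R) = Num.sqrt (5/4 - q) /\
               sin (rho0 R) = Num.sqrt (1 - (5/4 - q)).
  by apply: (@cos_sin_acos_sqrt _ (5/4 - q)); apply/andP; split; lra.
have [c2t s2t] := cos_sin_mul2 (theta0 R).
have [c2r s2r] := cos_sin_mul2 (rho0 R).
rewrite ct sqr_sqrtr // in c2t; rewrite st ct in s2t.
rewrite cr sqr_sqrtr ?subr_ge0 in c2r; last by lra.
rewrite cr sr in s2r.
set s := sin (2 * theta0 R) in s2t *; set S := sin (2 * rho0 R) in s2r *.
suff eS : S * (4 * q - 1) = s * (2 - 4 * q).
  by rewrite c2t c2r; split; lra.
(* both sides are nonnegative, and their squares differ by 8 (q^2 - 5/32) *)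
apply/eqP; rewrite -(@eqrXn2 _ 2) //; last 2 first.
- by rewrite s2r mulr_ge0 ?mulr_ge0 ?sqrtr_ge0 //; lra.
- by rewrite s2t mulr_ge0 ?mulr_ge0 ?sqrtr_ge0 //; lra.
by rewrite s2r s2t !exprMn !sqr_sqrtr; lra.
Qed.

Lemma moment_system_angles (theta rho : R) :
  moment_system (cos (2 * theta)) (sin (2 * theta)) (cos (2 * rho)) (sin (2 * rho))
  <-> exists (m n : int) (s : bool),
        let sg : R := if s then -1 else 1 in
        theta = sg * theta0 R + m%:~R * pi /\ rho = sg * rho0 R + n%:~R * pi.
Proof.
have base := moment_system_theta0_rho0.
have mul2N (x : R) : cos (2 * - x) = cos (2 * x) /\ sin (2 * - x) = - sin (2 * x).
  by rewrite mulrN cosN sinN.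
split=> [sys|[m [n [s /= [-> ->]]]]].
  have [ec eC [[es eS]|[es eS]]] :=
    moment_system_unique (cos2Dsin2 _) (cos2Dsin2 _) sys
                         (cos2Dsin2 _) (cos2Dsin2 _) base.
    have [m ->] := (cos_sin_mul2_eq theta (theta0 R)).1 (conj ec es).
    have [n ->] := (cos_sin_mul2_eq rho (rho0 R)).1 (conj eC eS).
    by exists m, n, false; rewrite /= !mul1r.
  have [[ct st] [cr sr]] := (mul2N (theta0 R), mul2N (rho0 R)).
  have [m ->] : exists m : int, theta = - theta0 R + m%:~R * pi.
    by apply/cos_sin_mul2_eq; rewrite ct st ec es.
  have [n ->] : exists n : int, rho = - rho0 R + n%:~R * pi.
    by apply/cos_sin_mul2_eq; rewrite cr sr eC eS.
  by exists m, n, true; rewrite /= !mulN1r.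
have shift (x : R) (k : int) :
    cos (2 * (x + k%:~R * pi)) = cos (2 * x) /\ sin (2 * (x + k%:~R * pi)) = sin (2 * x).
  by apply/cos_sin_mul2_eq; exists k.
case: s; rewrite ?mulN1r ?mul1r.
  have [[-> ->] [-> ->]] := (shift (- theta0 R) m, shift (- rho0 R) n).
  by have [[-> ->] [-> ->]] := (mul2N (theta0 R), mul2N (rho0 R)); apply: moment_systemN.
by have [[-> ->] [-> ->]] := (shift (theta0 R) m, shift (rho0 R) n).
Qed.
End Solutions.

Section FilterPolynomial.
Variable R : realType.
Implicit Types theta rho : R.

Lemma m0E theta rho : m0 theta rho =
  map_poly (real_complex R) ((Num.sqrt 2)^-1 *: \sum_(k < 6) acoef theta rho k *: 'X^k).
Proof.
rewrite scaler_sumr rmorph_sum; apply: eq_bigr => k _.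
by rewrite /= !map_polyZ map_polyXn scalerA -rmorphM.
Qed.

Lemma dvdp_XaddC_m0 n theta rho :
  (('X + 1) ^+ n %| m0 theta rho) = (('X + 1) ^+ n %| \sum_(k < 6) acoef theta rho k *: 'X^k).
Proof.
have -> : ('X + 1) ^+ n = map_poly (real_complex R) (('X + 1) ^+ n).
  by rewrite rmorphXn /= map_polyXaddC rmorph1.
by rewrite m0E dvdp_map dvdpZr // invr_eq0 sqrtr_eq0 -ltNge ltr0n.
Qed.

Lemma taylorN1_0_acoef theta rho : taylorN1_0 (acoef theta rho) = 0.
Proof. by rewrite /taylorN1_0 /acoef /=; field. Qed.

Lemma taylorN1_1_acoef theta rho :
  taylorN1_1 (acoef theta rho) = 1 - 2 * (cos (2 * theta) + cos (2 * rho)).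
Proof. by rewrite /taylorN1_1 /acoef /=; field. Qed.

Lemma taylorN1_2_acoef theta rho : taylorN1_2 (acoef theta rho) =
  -2 + 4 * (cos (2 * theta) + cos (2 * rho)) - (sin (2 * theta) + sin (2 * rho))
  + 2 * sin (2 * theta - 2 * rho).
Proof. by rewrite /taylorN1_2 /acoef /=; field. Qed.
End FilterPolynomial.

Theorem proposition8p12 (R : realType) (theta rho : R) :
  (('X + 1) ^+ 2 %| m0 theta rho
     <-> cos (2 * theta) + cos (2 * rho) = 2^-1)
  /\
  ((('X + 1) ^+ 3 %| m0 theta rho)
     <-> (cos (2 * theta) + cos (2 * rho) = 2^-1 /\
          sin (2 * theta) + sin (2 * rho) = 2 * sin (2 * theta - 2 * rho)))
  /\
  ((('X + 1) ^+ 3 %| m0 theta rho)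
     <-> exists (m n : int) (s : bool),
          let sg : R := if s then -1 else 1 in
          theta = sg * theta0 R + m%:~R * pi /\
          rho = sg * rho0 R + n%:~R * pi).
Proof.
have E2 : ('X + 1) ^+ 2 %| m0 theta rho <-> cos (2 * theta) + cos (2 * rho) = 2^-1.
  rewrite dvdp_XaddC_m0 dvdp_XaddC2_sum6 taylorN1_0_acoef taylorN1_1_acoef eqxx /=.
  by split=> [/eqP|h]; [lra | apply/eqP; lra].
have E3 : ('X + 1) ^+ 3 %| m0 theta rho <->
    moment_system (cos (2 * theta)) (sin (2 * theta)) (cos (2 * rho)) (sin (2 * rho)).
  rewrite dvdp_XaddC_m0 dvdp_XaddC3_sum6 taylorN1_0_acoef taylorN1_1_acoef.
  rewrite taylorN1_2_acoef eqxx sinB /=.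
  split=> [/andP[/eqP h1 /eqP h2] | [h1 h2]]; first by split; lra.
  by apply/andP; split; apply/eqP; lra.
split=> //; split; last exact: iff_trans E3 (moment_system_angles theta rho).
by rewrite sinB.
Qed.
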